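(* Let $r$ be a positive integer. Every $r$-outdegree-critical tournament is strongly connected.
   Context: A tournament is an orientation of a finite complete graph. A digraph is called $r$-outdegree-critical if it has minimum outdegree $r$ and the deletion of any vertex decreases the minimum outdegree (i.e., the minimum outdegree of the digraph obtained by deleting any single vertex is less than $r$). A digraph is strongly connected if for every ordered pair of vertices $x,y$ there is a directed path from $x$ to $y$. *)

From mathcomp Require Import all_boot.
Set Implicit Arguments. Unset Strict Implicit. Unset Printing Implicit Defensive.

(* A digraph on a finite vertex type T is given by its arc relation e : rel T
   (x -> y iff e x y).  Sub-digraphs induced by a vertex set S : {set T}. *)

Definition tournament (T : finType) (e : rel T) : Prop :=
  (forall x, ~~ e x x) /\
  (forall x y, x != y -> (e x y || e y x) && ~~ (e x y && e y x)).

Definition outdeg_in (T : finType) (e : rel T) (S : {set T}) (x : T) : nat :=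
  #|[set y in S | e x y]|.

Definition min_outdeg_in (T : finType) (e : rel T) (S : {set T}) (r : nat) : Prop :=
  (forall x, x \in S -> r <= outdeg_in e S x) /\
  (exists2 x, x \in S & outdeg_in e S x = r).

Definition min_outdeg_lt_in (T : finType) (e : rel T) (S : {set T}) (r : nat) : Prop :=
  exists2 x, x \in S & outdeg_in e S x < r.

Definition outdeg_critical (T : finType) (e : rel T) (r : nat) : Prop :=
  min_outdeg_in e [set: T] r /\
  (forall v : T, min_outdeg_lt_in e [set~ v] r).

Definition strongly_connected (T : finType) (e : rel T) : Prop :=
  forall x y : T, connect e x y.

(* If x cannot reach y, the set A of vertices reachable from x is closed under
   out-arcs and misses y.  A vertex of A has all its out-neighbours in A, and
   in a tournament a vertex outside A beats every vertex of A, which has at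
   least r elements since it contains the out-neighbours of x.  Hence every
   vertex keeps at least r out-neighbours in A, so deleting y does not lower
   the minimum outdegree. *)
From mathcomp Require Import all_boot.

Set Implicit Arguments.
Unset Strict Implicit.
Unset Printing Implicit Defensive.

Definition out_closed (T : finType) (e : rel T) (A : {set T}) : Prop :=
  forall a b, a \in A -> e a b -> b \in A.

Section OutDegree.

Variables (T : finType) (e : rel T).

Lemma outdeg_in_subset (S1 S2 : {set T}) x :
  S1 \subset S2 -> outdeg_in e S1 x <= outdeg_in e S2 x.
Proof.
move=> /subsetP sS12; apply: subset_leq_card; apply/subsetP => y.
by rewrite !inE => /andP [/sS12 -> ->].
Qed.

Lemma outdeg_in_leq_card (S : {set T}) x : outdeg_in e S x <= #|S|.
Proof. by apply: subset_leq_card; apply/subsetP => y; rewrite inE => /andP []. Qed.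

Lemma out_closed_outdeg_inT (A : {set T}) x :
  out_closed e A -> x \in A -> outdeg_in e A x = outdeg_in e [set: T] x.
Proof.
move=> clA xA; apply: eq_card => y; rewrite !inE andTb.
by apply/andP/idP => [[] | exy] //; split=> //; apply: clA exy.
Qed.

Lemma out_closed_connect x : out_closed e [set y | connect e x y].
Proof. by move=> a b; rewrite !inE => xa eab; apply: connect_trans xa (connect1 eab). Qed.

Hypothesis tour : tournament e.

Lemma tournament_out_closed_arc (A : {set T}) w a :
  out_closed e A -> w \notin A -> a \in A -> e w a.
Proof.
move=> clA wA aA; have [_ tot] := tour.
have wa : w != a by apply: contraNneq wA => ->.
case/andP: (tot w a wa) => /orP [// | eaw] _.
by move: wA; rewrite (clA a w aA eaw).
Qed.

Lemma tournament_outdeg_out_closed (A : {set T}) w :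
  out_closed e A -> w \notin A -> outdeg_in e A w = #|A|.
Proof.
move=> clA wA; apply: eq_card => a; rewrite inE.
by case: (boolP (a \in A)) => // aA; rewrite (tournament_out_closed_arc clA wA aA).
Qed.

Lemma tournament_outdeg_out_closed_ge (A : {set T}) x r :
  out_closed e A -> x \in A -> (forall v, r <= outdeg_in e [set: T] v) ->
  forall w, r <= outdeg_in e A w.
Proof.
move=> clA xA minr w; case: (boolP (w \in A)) => wA.
  by rewrite (out_closed_outdeg_inT clA wA).
rewrite (tournament_outdeg_out_closed clA wA).
apply: leq_trans (minr x) _.
by rewrite -(out_closed_outdeg_inT clA xA) outdeg_in_leq_card.
Qed.

End OutDegree.

Theorem lemma2p2 (T : finType) (e : rel T) (r : nat) :
  0 < r -> tournament e -> outdeg_critical e r -> strongly_connected e.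
Proof.
move=> _ tour [[minr _] crit] x y; apply: contraT => nxy.
pose A := [set z | connect e x z].
have xA : x \in A by rewrite inE connect0.
have A_sub : A \subset [set~ y].
  by apply/subsetP => z; rewrite !inE; apply: contraTneq => ->.
have minrT v : r <= outdeg_in e [set: T] v by apply: minr; rewrite inE.
have clA : out_closed e A := out_closed_connect (x := x).
have [w _] := crit y; rewrite ltnNge (leq_trans _ (outdeg_in_subset e w A_sub)) //.
exact: (tournament_outdeg_out_closed_ge tour clA xA minrT w).
Qed.
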